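(* For all $x\in[0,1/4]$ we have $c_{3,3}(x) = 1/4 - x$.
   Context: For a graph $G$, $k_3(G)$ is the number of triangles in $G$ and $\overline{G}$ the complement. A pair $(x,y)\in[0,1]^2$ is realised by a sequence of graphs $(G_n)_{n\in\mathbb{N}}$ with $G_n$ of order $n$ if $\lim_{n\to\infty} k_3(\overline{G_n})/\binom{n}{3} = x$ and $\lim_{n\to\infty} k_3(G_n)/\binom{n}{3} = y$. $\Omega_{3,3}$ is the set of all realised pairs and $c_{3,3}(x) = \inf\{y : (x,y)\in\Omega_{3,3}\}$. *)

From HB Require Import structures.
From mathcomp Require Import all_boot all_order all_algebra.
From mathcomp Require Import all_classical all_reals all_analysis.
Set Implicit Arguments. Unset Strict Implicit. Unset Printing Implicit Defensive.
Import Order.TTheory GRing.Theory Num.Theory.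
Import numFieldNormedType.Exports.
Local Open Scope ring_scope.
Local Open Scope classical_set_scope.

Definition simple_graph (n : nat) (e : rel 'I_n) : Prop :=
  (forall x y, e x y = e y x) /\ (forall x, ~~ e x x).

Definition gcompl (n : nat) (e : rel 'I_n) : rel 'I_n :=
  fun x y => (x != y) && ~~ e x y.

Definition k3 (n : nat) (e : rel 'I_n) : nat :=
  #|[set A : {set 'I_n} | (#|A| == 3)%N &&
      [forall x in A, forall y in A, (x != y) ==> e x y]]|.

Definition k3_dens (R : realType) (n : nat) (e : rel 'I_n) : R :=
  (k3 e)%:R / ('C(n, 3))%:R.

Definition realised (R : realType) (x y : R) : Prop :=
  exists G : forall n : nat, rel 'I_n,
    (forall n, simple_graph (G n)) /\
    ((fun n : nat => k3_dens R (gcompl (G n))) @ \oo --> x) /\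
    ((fun n : nat => k3_dens R (G n)) @ \oo --> y).

Definition Omega33 (R : realType) : set (R * R) :=
  [set p | realised p.1 p.2].

Definition c33 (R : realType) (x : R) : R :=
  inf [set y | @Omega33 R (x, y)].

From HB Require Import structures.
From mathcomp Require Import all_classical all_reals all_analysis.
From mathcomp Require Import all_boot all_order all_algebra.
From mathcomp Require Import ring lra zify.
Set Implicit Arguments. Unset Strict Implicit. Unset Printing Implicit Defensive.
Import Order.TTheory GRing.Theory Num.Theory.
Import numFieldNormedType.Exports.

(* Goodman's count: in a triple that is not monochromatic (for G against its
   complement) exactly two vertices see one edge of each colour, and counting
   these "mixed" vertex-triple incidences through the degrees gives
     2 (k3 G + k3 G^c) + \sum_v d_v (n - 1 - d_v) = 2 C(n, 3).
   Since d (n - 1 - d) <= (n - 1)^2 / 4, every graph has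
   k3 G + k3 G^c >= C(n, 3) / 4 - O(n^2), so x + y >= 1/4 on Omega_{3,3}.
   Conversely, the graphs [switched n r] below are regular up to one vertex, so
   for them k3 G + k3 G^c = C(n, 3) / 4 + O(n^2); as r runs from 0 to n/2 their
   triangle count climbs from 0 to about C(n, 3) / 4 in steps of O(n^2), and a
   discrete intermediate value argument realises every (1/4 - y, y). *)

Lemma mul6_bin3 n : 6 * 'C(n, 3) = n * n.-1 * n.-2.
Proof.
rewrite mulnC bin_ffact !ffactnS ffactn0 muln1.
by case: n => [|[|[|n]]] //=; rewrite mulnA.
Qed.

Lemma leq_4mul_subn d k : 4 * (d * (k - d)) <= k * k.
Proof.
case: (leqP d k) => [dk|/ltnW kd]; last by rewrite (eqP kd) !muln0.
by rewrite -{2 3}(subnKC dk); exact: nat_AGM2.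
Qed.

Section Triangles.
Variable n : nat.
Implicit Types (e : rel 'I_n) (A : {set 'I_n}) (v a b : 'I_n).

Definition clique e A := [forall x in A, forall y in A, (x != y) ==> e x y].

Lemma k3E e : k3 e = \sum_(A : {set 'I_n} | #|A| == 3) clique e A.
Proof.
rewrite /k3 -sum1_card [LHS]big_mkcond [RHS]big_mkcond /=; apply: eq_bigr => A _.
by rewrite /in_mem /= /classical_sets.in_set asboolb; case: (_ == 3).
Qed.

Lemma cliqueP e A :
  reflect {in A &, forall x y, x != y -> e x y} (clique e A).
Proof.
apply: (iffP forall_inP) => [cl x y xA yA | cl x xA].
  by move/forall_inP: (cl x xA) => /(_ y yA)/implyP.
by apply/forall_inP => y yA; apply/implyP; apply: cl.
Qed.

Lemma card3P A :
  reflect (exists a b c, [/\ a != b, b != c, a != c & A = [set a; b; c]])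
          (#|A| == 3).
Proof.
apply: (iffP idP) => [|[a [b [c [ab bc ac ->]]]]].
  have [[|a [|b [|c []]]] //=] := cards_eqP; rewrite !inE !andbT negb_or.
  move=> /andP [/andP [ab ac] bc] _.
  by exists a, b, c; split=> //; apply/setP => z; rewrite !inE orbA.
by rewrite -setUA !cardsU1 cards1 !inE negb_or ab ac bc.
Qed.

Lemma set3P (x a b c : 'I_n) :
  reflect [\/ x = a, x = b | x = c] (x \in [set a; b; c]).
Proof.
rewrite !inE -orbA; apply: (iffP or3P) => -[] /eqP ->;
  by [constructor 1 | constructor 2 | constructor 3].
Qed.

Lemma clique3 e (e_sym : forall x y, e x y = e y x) a b c :
  a != b -> b != c -> a != c ->
  clique e [set a; b; c] = [&& e a b, e b c & e a c].
Proof.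
move=> ab bc ac; apply/cliqueP/and3P => [cl | [eab ebc eac] x y].
  by split; apply: cl; rewrite ?inE ?eqxx ?orbT.
by move=> /set3P[]-> /set3P[]->; rewrite ?eqxx // => _; rewrite // e_sym.
Qed.

Lemma k3_bipartite e (side : 'I_n -> bool) :
  (forall x y, x != y -> side x = side y -> ~~ e x y) -> k3 e = 0.
Proof.
move=> no_edge; rewrite k3E; apply: big1 => A /card3P [a [b [c [ab bc ac ->]]]].
apply/eqP; rewrite eqb0; apply/negP => /cliqueP cl.
have edge x y : x \in [set a; b; c] -> y \in [set a; b; c] -> x != y ->
    side x != side y.
  by move=> xA yA xy; apply: contraTneq (cl x y xA yA xy); apply: no_edge.
move: (edge a b) (edge b c) (edge a c); rewrite !inE !eqxx ?orTb ?orbT ab bc ac.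
move=> /(_ isT isT isT) sab /(_ isT isT isT) sbc /(_ isT isT isT) sac.
by move: sab sbc sac; case: (side a); case: (side b); case: (side c).
Qed.

Lemma card_meet3 (S : {set 'I_n}) :
  #|[set A : {set 'I_n} | (#|A| == 3) && ~~ [disjoint A & S]]| <= #|S| * (n * n).
Proof.
have -> : n * n = #|[set: 'I_n * 'I_n]| by rewrite cardsT card_prod card_ord.
rewrite -cardsX.
apply: leq_trans (leq_imset_card (fun t => [set t.1; t.2.1; t.2.2]) _).
apply/subset_leq_card/subsetP => A; rewrite inE => /andP [/card3P].
move=> [a [b [c [ab bc ac ->]]]] /pred0Pn [s /andP [/set3P sA sS]].
have {}sS : s \in S := sS.
apply/imsetP; case: sA sS => -> sS.
- by exists (a, (b, c)); rewrite ?inE ?sS.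
- exists (b, (a, c)); first by rewrite !inE sS.
  by apply/setP => z; rewrite !inE (orbC (z == a)).
- exists (c, (a, b)); first by rewrite !inE sS.
  by apply/setP => z; rewrite !inE orbC orbA.
Qed.

Lemma k3_local e e' (S : {set 'I_n}) :
  (forall x y, x \notin S -> y \notin S -> e x y = e' x y) ->
  k3 e <= k3 e' + #|S| * (n * n).
Proof.
move=> agree; apply: leq_trans (leq_add (leqnn (k3 e')) (card_meet3 S)).
rewrite !k3E -sum1dep_card big_mkcondr -big_split /=; apply: leq_sum => A _.
case: (boolP [disjoint A & S]) => [AS|_] /=; last first.
  exact: leq_trans (leq_b1 _) (leq_addl _ _).
have notS z : z \in A -> z \notin S by move=> zA; rewrite (disjointFr AS zA).
suff -> : clique e A = clique e' A by rewrite addn0.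
apply: eq_forallb_in => x xA; apply: eq_forallb_in => y yA.
by rewrite agree ?notS.
Qed.

Definition nbhd e v := [set a | e v a].
Definition non_nbhd e v := ~: nbhd e v :\ v.
Definition deg e v := #|nbhd e v|.
Definition mixed e v A :=
  [exists a in A, exists b in A, [&& e v a, ~~ e v b & b != v]].

Section Goodman.
Variable e : rel 'I_n.
Hypothesis e_simple : simple_graph e.
Let e_sym := proj1 e_simple.
Let e_irr := proj2 e_simple.

Lemma mixed3 v p q : v != p -> v != q -> p != q ->
  mixed e v [set v; p; q] = (e v p != e v q).
Proof.
move=> vp vq pq; apply/exists_inP/idP => [[a /set3P aA /exists_inP [b /set3P bA]]|].
  move: (e_irr v); case: aA bA => -> [] ->; rewrite ?eqxx ?andbF //;
    by case: (e v v); case: (e v p); case: (e v q).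
case Ep: (e v p); case Eq: (e v q) => //= _.
  exists p; rewrite ?inE ?eqxx ?orbT //.
  by apply/exists_inP; exists q; rewrite ?inE ?eqxx ?orbT // Ep Eq eq_sym vq.
exists q; rewrite ?inE ?eqxx ?orbT //.
by apply/exists_inP; exists p; rewrite ?inE ?eqxx ?orbT // Ep Eq eq_sym vp.
Qed.

Lemma card_non_nbhd v : #|non_nbhd e v| = n.-1 - deg e v.
Proof.
have := cardsC (nbhd e v); rewrite (cardsD1 v (~: _)) !inE e_irr card_ord.
by rewrite /deg /non_nbhd; lia.
Qed.

Lemma nbhd_non_nbhd_neq v a b : a \in nbhd e v -> b \in non_nbhd e v ->
  [/\ v != a, v != b & a != b].
Proof.
rewrite !inE => eva /andP [bv nevb]; split; last 1 first.
- by apply: contraNneq nevb => <-.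
- by apply: contraTneq eva => <-; apply: e_irr.
- by rewrite eq_sym.
Qed.

Lemma mixed_triplesE v :
  [set A : {set 'I_n} | [&& #|A| == 3, v \in A & mixed e v A]] =
  (fun ab => [set v; ab.1; ab.2]) @: setX (nbhd e v) (non_nbhd e v).
Proof.
apply/setP => A; rewrite inE; apply/and3P/imsetP => [[A3 vA]|[[a b]]].
  case/exists_inP => a aA /exists_inP [b bA /and3P [eva nevb bv]].
  have [aN bM] : a \in nbhd e v /\ b \in non_nbhd e v by rewrite !inE eva nevb bv.
  have [va vb ab] := nbhd_non_nbhd_neq aN bM.
  exists (a, b); first by rewrite inE aN bM.
  have S3 : #|[set v; a; b]| = 3 by apply/eqP/card3P; exists v, a, b.
  apply/eqP; rewrite eq_sym eqEcard (eqP A3) S3 leqnn andbT.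
  by apply/subsetP => x /set3P[]->.
rewrite inE /= => /andP [aN bM] ->.
have [va vb ab] := nbhd_non_nbhd_neq aN bM.
split; first by apply/card3P; exists v, a, b.
  by rewrite !inE eqxx.
by rewrite mixed3 //; move: aN bM; rewrite !inE => -> /andP [_ /negbTE ->].
Qed.

Lemma card_mixed v :
  #|[set A : {set 'I_n} | [&& #|A| == 3, v \in A & mixed e v A]]| =
  deg e v * (n.-1 - deg e v).
Proof.
rewrite mixed_triplesE card_in_imset ?cardsX ?card_non_nbhd // => -[a b] [a' b'].
rewrite !inE /= => /andP [eva /andP [bv nevb]] /andP [eva' /andP [_ nevb']] E.
have /set3P Ha : a \in [set v; a'; b'] by rewrite -E !inE eqxx orbT.
have /set3P Hb : b \in [set v; a'; b'] by rewrite -E !inE eqxx orbT.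
by case: Ha Hb eva nevb bv => -> [] ->;
  rewrite ?eqxx ?eva' ?(negbTE nevb') ?(negbTE (e_irr v)).
Qed.

Lemma mixed_count3 A : #|A| == 3 ->
  \sum_(v in A) mixed e v A + 2 * clique e A + 2 * clique (gcompl e) A = 2.
Proof.
case/card3P => a [b [c [ab bc ac ->]]].
have gsym x y : gcompl e x y = gcompl e y x by rewrite /gcompl eq_sym e_sym.
have Eb : [set a; b; c] = [set b; a; c].
  by apply/setP => z; rewrite !inE (orbC (z == a)).
have Ec : [set a; b; c] = [set c; a; b].
  by apply/setP => z; rewrite !inE orbC orbA.
rewrite -setUA big_setU1 ?big_setU1 ?big_set1 ?inE ?negb_or ?ab ?ac ?bc //=.
rewrite setUA {2}Eb {2}Ec !mixed3 ?(eq_sym b) ?(eq_sym c) // (clique3 e_sym) //.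
rewrite (clique3 gsym) //.
rewrite /gcompl ab bc ac (e_sym b a) (e_sym c a) (e_sym c b).
by case: (e a b); case: (e b c); case: (e a c).
Qed.

Lemma sum_deg_mixed :
  \sum_v deg e v * (n.-1 - deg e v) =
  \sum_(A : {set 'I_n} | #|A| == 3) \sum_(v in A) mixed e v A.
Proof.
transitivity (\sum_v \sum_(A : {set 'I_n} | #|A| == 3) ((v \in A) && mixed e v A : nat)).
  apply: eq_bigr => v _; rewrite -card_mixed -sum1dep_card big_mkcondr.
  by apply: eq_bigr => A _; case: (_ && _).
rewrite exchange_big; apply: eq_bigr => A _ /=.
by rewrite [RHS]big_mkcond; apply: eq_bigr => v _; case: (v \in A).
Qed.

Theorem goodman_identity :
  2 * (k3 e + k3 (gcompl e)) + \sum_v deg e v * (n.-1 - deg e v) = 2 * 'C(n, 3).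
Proof.
have -> : 'C(n, 3) = \sum_(A : {set 'I_n} | #|A| == 3) 1.
  by rewrite sum1dep_card card_draws card_ord.
rewrite sum_deg_mixed !k3E -big_split !big_distrr -big_split /=.
apply: eq_bigr => A A3.
by rewrite muln1 -[RHS](mixed_count3 A3) mulnDr addnC addnA.
Qed.

Lemma goodman_lower : 'C(n, 3) <= 4 * (k3 e + k3 (gcompl e)) + 4 * (n * n).
Proof.
have mixed_le : 4 * \sum_v deg e v * (n.-1 - deg e v) <= n * (n.-1 * n.-1).
  rewrite big_distrr /=; apply: leq_trans (_ : \sum_(v : 'I_n) n.-1 * n.-1 <= _).
    by apply: leq_sum => v _; apply: leq_4mul_subn.
  by rewrite sum_nat_const card_ord.
move: goodman_identity mixed_le (mul6_bin3 n).
move: (k3 e + k3 (gcompl e)) (\sum_v _) 'C(n, 3) => K s c.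
case: n => [|[|m]] /=; nia.
Qed.

End Goodman.
End Triangles.

Definition low_clique (r p q : nat) := [&& p != q, p < r & q < r].

(* Vertex [i < m.*2] is copy [odd i] of the point [i./2] of {0, ..., m-1}: two
   copies on the same side are adjacent iff their points are adjacent in the
   clique on {0, ..., r-1}, copies on opposite sides iff they are not.  For
   r = 0 this is K_{m,m}; for r = m the complement is K_{m,m} minus a perfect
   matching.  When n is odd the last vertex is isolated. *)
Definition switch_edge (m r i j : nat) :=
  [&& i < m.*2, j < m.*2, i != j & (odd i == odd j) == low_clique r i./2 j./2].

Definition switched n r : rel 'I_n := fun x y => switch_edge n./2 r x y.
Arguments switched : clear implicits.

Lemma switched_simple n r : simple_graph (switched n r).
Proof.
split=> [x y|x]; last by rewrite /switched /switch_edge eqxx !andbF.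
rewrite /switched /switch_edge /low_clique (eq_sym (val x)) (eq_sym (odd y)).
rewrite (eq_sym x./2).
by case: (x < _); case: (y < _); case: (x./2 < r); case: (y./2 < r).
Qed.

Lemma switch_edge_pair m r (b : bool) p q : p < m -> q < m ->
  switch_edge m r (b + p.*2) q.*2 + switch_edge m r (b + p.*2) q.*2.+1 = 1.
Proof.
move=> pm qm.
have [q2 q21] : q.*2 < m.*2 /\ q.*2.+1 < m.*2 by rewrite ltn_double ltn_Sdouble.
have i2 : b + p.*2 < m.*2 by case: b; rewrite ?ltn_double ?ltn_Sdouble.
rewrite /switch_edge {}i2 q2 q21 /= oddD !odd_double addbF.
rewrite half_bit_double doubleK uphalf_double.
case: (eqVneq p q) => [<-|pq].
  by rewrite /low_clique eqxx; case: b; rewrite /= ?add0n ?add1n ?eqxx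
    ?(gtn_eqF (ltnSn _)) ?(ltn_eqF (ltnSn _)).
have [ne2 ne21] : b + p.*2 != q.*2 /\ b + p.*2 != q.*2.+1.
  split; apply: contraNneq pq => /(congr1 half) /=;
    by rewrite half_bit_double ?doubleK ?uphalf_double => ->.
by rewrite {}ne2 {}ne21; case: b; case: (low_clique _ _ _).
Qed.

Lemma sum_nat_pairs (F : nat -> nat) m :
  \sum_(0 <= j < m.*2) F j = \sum_(0 <= q < m) (F q.*2 + F q.*2.+1).
Proof.
elim: m => [|m IH]; first by rewrite !big_geq.
by rewrite doubleS !big_nat_recr //= IH addnA.
Qed.

Lemma double_half_leq n : (n./2).*2 <= n.
Proof. by rewrite -[n in _ <= n](odd_double_half n) leq_addl. Qed.

Lemma deg_switched n r (v : 'I_n) : v < (n./2).*2 -> deg (switched n r) v = n./2.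
Proof.
move=> vm; set m := n./2.
rewrite /deg -sum1dep_card big_mkcond /=.
rewrite (eq_bigr (fun i : 'I_n => switch_edge m r v i : nat)) //.
rewrite -(big_mkord xpredT (fun i => switch_edge m r v i : nat)).
have high0 : \sum_(m.*2 <= i < n) (switch_edge m r v i : nat) = 0.
  rewrite big_nat_cond big1 // => i /andP [/andP [mi _] _].
  by rewrite /switch_edge [i < _]ltnNge mi andbF.
rewrite (big_cat_nat (leq0n m.*2) (double_half_leq n)) /= high0 addn0 sum_nat_pairs.
rewrite big_nat_cond (eq_bigr (fun _ => 1)) -?big_nat_cond.
  by rewrite sum_nat_const_nat subn0 muln1.
move=> q /andP [/andP [_ qm] _]; rewrite -(odd_double_half v).
by apply: switch_edge_pair; rewrite // ltn_half_double.
Qed.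

Lemma switched_mixed_ge n r :
  (n./2).*2 * (n./2 * (n.-1 - n./2)) <=
  \sum_v deg (switched n r) v * (n.-1 - deg (switched n r) v).
Proof.
set m := n./2; set c := m * (n.-1 - m).
apply: leq_trans (_ : \sum_(v < n) (if v < m.*2 then c else 0) <= _); last first.
  by apply: leq_sum => v _; case: ifP => // vm; rewrite deg_switched.
rewrite -(big_mkord xpredT (fun v => if v < m.*2 then c else 0)).
rewrite (big_cat_nat (leq0n m.*2) (double_half_leq n)) /=.
rewrite -[X in X <= _]addn0 leq_add //.
rewrite big_nat_cond (eq_bigr (fun _ => c)) -?big_nat_cond.
  by rewrite sum_nat_const_nat subn0.
by move=> v /andP [/andP [_ ->]].
Qed.

Lemma goodman_upper_switched n r :
  4 * (k3 (switched n r) + k3 (gcompl (switched n r))) <= 'C(n, 3) + 4 * (n * n).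
Proof.
move: (goodman_identity (switched_simple n r)) (switched_mixed_ge n r) (mul6_bin3 n).
move: (k3 _ + k3 _) (\sum_v _) 'C(n, 3) (odd_double_half n) => K s c.
move: (n./2) => m; case: (odd n) => <-; case: m => [|m];
  by rewrite ?doubleS /= ?add0n ?add1n ?subSS /=; nia.
Qed.

Lemma k3_switched0 n : k3 (switched n 0) = 0.
Proof.
apply: (@k3_bipartite _ _ (fun x => odd x)) => x y _ /= oxy.
by rewrite /switched /switch_edge oxy eqxx /low_clique !ltn0 !andbF.
Qed.

Lemma k3_compl_switched_half n : k3 (gcompl (switched n n./2)) <= n * n.
Proof.
set m := n./2; set S := [set v : 'I_n | m.*2 <= v].
have cardS : #|S| <= 1.
  apply/card_le1_eqP => x y; rewrite !inE => mx my; apply: ord_inj.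
  have := ltn_ord x; have := ltn_ord y; have := odd_double_half n; rewrite -/m.
  by case: (odd n); lia.
pose e' x y := [&& gcompl (switched n m) x y, x < m.*2 & y < m.*2].
have e'0 : k3 e' = 0.
  apply: (@k3_bipartite _ _ (fun x => odd x)) => x y xy /= oxy.
  rewrite /e' /gcompl xy /switched /switch_edge oxy eqxx /=.
  case/boolP: (x < m.*2) => // xm; case/boolP: (y < m.*2) => //= ym.
  have xy2 : x./2 != y./2.
    apply: contra xy => /eqP xy2; apply/eqP/val_inj.
    by rewrite -[val x]odd_double_half -[val y]odd_double_half oxy xy2.
  have xy' : val x != val y := xy.
  by rewrite /low_clique xy2 !ltn_half_double xm ym xy'.
apply: leq_trans (k3_local (e' := e') (S := S) _) _.
  by move=> x y; rewrite !inE -!ltnNge /e' => -> ->; rewrite !andbT.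
by rewrite e'0 add0n -[X in _ <= X]mul1n leq_mul2r cardS orbT.
Qed.

Lemma k3_switched_step n r :
  k3 (switched n r.+1) <= k3 (switched n r) + 2 * (n * n).
Proof.
set S := [set v : 'I_n | v./2 == r].
have cardS : #|S| <= 2.
  rewrite -card_bool; apply: (@leq_card_in _ _ (fun v : 'I_n => odd v)).
  move=> x y; rewrite !inE => /eqP x2 /eqP y2 oxy; apply: val_inj.
  by rewrite -[val x]odd_double_half -[val y]odd_double_half oxy x2 y2.
apply: leq_trans (k3_local (e' := switched n r) (S := S) _) _.
  move=> x y; rewrite !inE => /negbTE xr /negbTE yr.
  by rewrite /switched /switch_edge /low_clique !ltnS !(leq_eqVlt (_./2)) xr yr.
by rewrite leq_add2l leq_mul2r cardS orbT.
Qed.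

Lemma cube_leq_bin3 n : 4 <= n -> n ^ 3 <= 24 * 'C(n, 3).
Proof.
move=> n_ge4; rewrite -[24]/(4 * 6) -mulnA mul6_bin3.
rewrite !expnS expn0 muln1.
by case: n n_ge4 => [|[|[|[|n]]]] //= _; nia.
Qed.

Local Open Scope ring_scope.
Local Open Scope classical_set_scope.

Lemma discrete_ivt (R : realDomainType) (f : nat -> R) (t d : R) (m : nat) :
  f 0%N <= t -> t - d <= f m -> (forall r, (r < m)%N -> f r.+1 <= f r + d) ->
  exists r, `|f r - t| <= d.
Proof.
move=> f0 fm step.
suff [//|] : (exists r, `|f r - t| <= d) \/ f m < t - d by rewrite ltNge fm.
elim: m {fm} step => [|k IH] step.
  have [lt|ge] := ltP (f 0%N) (t - d); [by right | left; exists 0%N].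
  by rewrite ler_distl; apply/andP; split; lra.
have [[r fr]|lt] := IH (fun r rk => step r (ltnW rk)); first by left; exists r.
have := step k (ltnSn k).
have [lt'|ge] := ltP (f k.+1) (t - d) => fk; [by right | left; exists k.+1].
by rewrite ler_distl; apply/andP; split; lra.
Qed.

Section Densities.
Variable R : realType.

Lemma cvg_dist_le_invn (u : nat -> R) (L K : R) N :
  (forall n, (N <= n)%N -> `|u n - L| <= K / n%:R) -> u @ \oo --> L.
Proof.
move=> u_near; apply/cvgrPdist_le => eps eps_gt0; near=> n.
rewrite distrC; apply: le_trans (u_near n _) _; first by near: n; exact: nbhs_infty_ge.
have n_gt0 : (0 : R) < n%:R by rewrite ltr0n; near: n; exact: nbhs_infty_gt.
by rewrite ler_pdivrMr // mulrC -ler_pdivrMr //; near: n; exact: nbhs_infty_ger.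
Unshelve. all: by end_near.
Qed.

Lemma sqr_div_bin3 n : (4 <= n)%N -> n%:R ^+ 2 / 'C(n, 3)%:R <= 24 / n%:R :> R.
Proof.
move=> n_ge4; have n_gt0 : (0 < n)%N by apply: leq_trans n_ge4.
have C_gt0 : (0 < 'C(n, 3))%N by rewrite bin_gt0; apply: leq_trans n_ge4.
rewrite ler_pdivrMr ?ltr0n // mulrAC ler_pdivlMr ?ltr0n //.
by rewrite -natrX -!natrM ler_nat -expnSr cube_leq_bin3.
Qed.

Lemma k3_dens_sum_ge n (e : rel 'I_n) : simple_graph e -> (4 <= n)%N ->
  1 / 4 - 24 / n%:R <= k3_dens R (gcompl e) + k3_dens R e.
Proof.
move=> e_simple n_ge4; rewrite /k3_dens -mulrDl.
have C_gt0 : (0 : R) < 'C(n, 3)%:R by rewrite ltr0n bin_gt0; apply: leq_trans n_ge4.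
apply: le_trans (_ : 1 / 4 - n%:R ^+ 2 / 'C(n, 3)%:R <= _).
  by have := sqr_div_bin3 n_ge4; lra.
rewrite ler_pdivlMr // mulrBl divfK ?gt_eqF // expr2.
have := goodman_lower e_simple; rewrite -(ler_nat R) !natrD !natrM.
lra.
Qed.

Lemma dens_dist_le (a y K : R) n : (4 <= n)%N ->
  `|a - y * 'C(n, 3)%:R| <= K * n%:R ^+ 2 ->
  `|a / 'C(n, 3)%:R - y| <= 24 * K / n%:R.
Proof.
move=> n_ge4 a_near.
have C_gt0 : (0 : R) < 'C(n, 3)%:R by rewrite ltr0n bin_gt0; apply: leq_trans n_ge4.
have K_ge0 : 0 <= K.
  have n_gt0 : (0 : R) < n%:R by rewrite ltr0n; apply: leq_trans n_ge4.
  by rewrite -(pmulr_lge0 _ (exprn_gt0 2 n_gt0)); apply: le_trans a_near.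
have -> : a / 'C(n, 3)%:R - y = (a - y * 'C(n, 3)%:R) / 'C(n, 3)%:R.
  by field; rewrite gt_eqF.
rewrite normrM normfV (gtr0_norm C_gt0).
apply: le_trans (ler_wpM2r _ a_near) _; first by rewrite invr_ge0 ltW.
rewrite -[_ * _ / 'C(n, 3)%:R]mulrA.
apply: le_trans (ler_wpM2l K_ge0 (sqr_div_bin3 n_ge4)) _.
by rewrite mulrA (mulrC K).
Qed.

Lemma k3_switched_approx (y : R) n : 0 <= y <= 1 / 4 ->
  exists r, `|(k3 (switched n r))%:R - y * 'C(n, 3)%:R| <= 2 * n%:R ^+ 2.
Proof.
case/andP => y_ge0 y_le.
apply: (@discrete_ivt _ (fun r => (k3 (switched n r))%:R) _ _ n./2).
- by rewrite k3_switched0 mulr_ge0.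
- have := goodman_lower (switched_simple n n./2).
  have := k3_compl_switched_half n.
  have := ler_wpM2r (ler0n R 'C(n, 3)) y_le.
  rewrite -!(ler_nat R) !natrD !natrM expr2; lra.
- move=> r _; have := k3_switched_step n r.
  by rewrite -(ler_nat R) natrD natrM natrM expr2.
Qed.

Lemma k3_sum_switched_approx n r :
  `|(k3 (switched n r) + k3 (gcompl (switched n r)))%:R - 'C(n, 3)%:R / 4|
    <= n%:R ^+ 2 :> R.
Proof.
have := goodman_lower (switched_simple n r); have := goodman_upper_switched n r.
rewrite -!(ler_nat R) !natrD !natrM expr2 ler_distl => up low.
by apply/andP; split; lra.
Qed.

Lemma realised_switched (x : R) : 0 <= x <= 1 / 4 -> realised x (1 / 4 - x).
Proof.
case/andP => x_ge0 x_le; have y_bd : 0 <= 1 / 4 - x <= 1 / 4 by apply/andP; split; lra.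
pose r n := xchoose (k3_switched_approx n y_bd).
have r_near n := xchooseP (k3_switched_approx n y_bd).
exists (fun n => switched n (r n)); split; first by move=> n; apply: switched_simple.
split; last first.
  apply: (@cvg_dist_le_invn _ _ (24 * 2) 4) => n n_ge4.
  exact: dens_dist_le (r_near n).
apply: (@cvg_dist_le_invn _ _ (24 * 3) 4) => n n_ge4; apply: dens_dist_le => //.
have := r_near n; have := k3_sum_switched_approx n (r n).
rewrite natrD !ler_distl => /andP [lo hi] /andP [lo' hi'].
by apply/andP; split; lra.
Qed.

Lemma realised_ge (x y : R) : realised x y -> 1 / 4 - x <= y.
Proof.
case=> G [G_simple [Gx Gy]]; suff : 1 / 4 <= x + y by lra.
have lb_cvg : (fun n => 1 / 4 - 24 / n%:R) @ \oo --> (1 / 4 : R).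
  apply: (@cvg_dist_le_invn _ _ 24 1) => n _.
  by rewrite addrAC subrr add0r normrN ger0_norm.
apply: (ler_cvg_to lb_cvg (cvgD Gx Gy)).
by near=> n; apply: k3_dens_sum_ge (G_simple n) _; near: n; exact: nbhs_infty_ge.
Unshelve. all: by end_near.
Qed.

End Densities.

Theorem lemma2p3 (R : realType) (x : R) :
  0 <= x <= 1 / 4 ->
  [set y | @Omega33 R (x, y)] !=set0 /\ c33 x = 1 / 4 - x.
Proof.
move=> x_bd.
have in_Omega : [set y | @Omega33 R (x, y)] (1 / 4 - x).
  exact: realised_switched.
have lb : lbound [set y | @Omega33 R (x, y)] (1 / 4 - x).
  by move=> y; exact: realised_ge.
have ne : [set y | @Omega33 R (x, y)] !=set0 by exists (1 / 4 - x).
split=> //; apply/le_anti/andP; split.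
- exact: ge_inf (ex_intro _ _ lb) _ in_Omega.
- exact: lb_le_inf ne lb.
Qed.
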